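(* Let $F$ be a field with $\mathrm{char}\,F\neq 2$, let $n\ge 1$, and let $\lambda\in F$ be nonzero. Let $I_n$ be the $F$-algebra defined in the context. Then every Rota--Baxter operator $R$ of weight $\lambda$ on $I_n$ is splitting: there exist subalgebras $A_1,A_2$ of $I_n$ with $I_n=A_1\oplus A_2$ as vector spaces such that $R(a_1+a_2)=-\lambda a_2$ for all $a_1\in A_1$, $a_2\in A_2$.
   Context: $I_n$ denotes the $n$-dimensional (non-associative) algebra over $F$ with basis $e_1,\ldots,e_n$ and multiplication given by $e_n\cdot e_n=2e_n$, $e_n\cdot e_j=e_j$, $e_j\cdot e_j=e_n$ for $j=1,\ldots,n-1$, with all other products of basis elements equal to zero (extended bilinearly). A linear operator $R\colon A\to A$ on an algebra $A$ is a Rota--Baxter operator of weight $\lambda\in F$ if $R(x)R(y)=R(R(x)y+xR(y)+\lambda xy)$ for all $x,y\in A$. *)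

From HB Require Import structures.
From mathcomp Require Import all_boot all_order all_algebra.
Set Implicit Arguments. Unset Strict Implicit. Unset Printing Implicit Defensive.
Import GRing.Theory.
Local Open Scope ring_scope.

(* The algebra I_n has carrier F^n = 'rV[F]_n with basis e_1..e_n given by
   delta_mx 0 i, i : 'I_n; the paper's index j in 1..n is i+1, so the
   distinguished basis vector e_n is the one with index n.-1. *)

Definition In_basis (F : fieldType) (n : nat) (i : 'I_n) : 'rV[F]_n :=
  delta_mx 0 i.

Definition In_is_last (n : nat) (i : 'I_n) : bool := (i : nat) == n.-1.

Definition In_en (F : fieldType) (n : nat) : 'rV[F]_n :=
  \row_(k < n) (In_is_last k)%:R.

Definition In_basis_mul (F : fieldType) (n : nat) (i j : 'I_n) : 'rV[F]_n :=
  if In_is_last i then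
    (if In_is_last j then 2%:R *: In_en F n else In_basis F j)
  else if (~~ In_is_last j) && (i == j) then In_en F n
  else 0.

Definition In_mul {F : fieldType} {n : nat} (x y : 'rV[F]_n) : 'rV[F]_n :=
  \sum_(i < n) \sum_(j < n) (x 0 i * y 0 j) *: @In_basis_mul F n i j.

Definition is_subalgebra (F : fieldType) (n : nat) (A : {vspace 'rV[F]_n}) :=
  forall x y, x \in A -> y \in A -> In_mul x y \in A.

Definition is_RB_operator (F : fieldType) (n : nat) (lam : F)
  (R : 'rV[F]_n -> 'rV[F]_n) :=
  linear R /\
  forall x y, In_mul (R x) (R y) =
              R (In_mul (R x) y + In_mul x (R y) + lam *: In_mul x y).

From HB Require Import structures.
From mathcomp Require Import all_boot all_order all_algebra.
From mathcomp Require Import ring.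
Set Implicit Arguments.
Unset Strict Implicit.
Unset Printing Implicit Defensive.
Import GRing.Theory.
Local Open Scope ring_scope.

(* In coordinates the product of I_n is x y = x_n y + <x, y> e_n.  Comparing the
   Rota-Baxter identity at (e_n, y) and at (y, e_n) shows that the defect
   D := R^2 + lam R has rank at most one: D y = y_n D e_n.  If D e_n were
   nonzero, R would scale the last coordinate by mu := (R e_n)_n, which forces
   R e_n = mu e_n, and the last coordinate of the identity at (e_n, e_n) then
   gives 2 (mu^2 + lam mu) = 0, i.e. D e_n = 0 after all.  Hence R^2 = -lam R,
   so -R/lam is a projection; its kernel and image are the two subalgebras of
   the splitting (the kernel is closed under the product because lam != 0). *)

Section RotaBaxterSplitting.
Variables (K : fieldType) (V : vectType K) (mul : V -> V -> V) (lam : K).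
Variable R : {linear V -> V}.
Hypothesis RB : forall x y,
  mul (R x) (R y) = R (mul (R x) y + mul x (R y) + lam *: mul x y).
Hypotheses (mul0v : forall x, mul 0 x = 0) (mulv0 : forall x, mul x 0 = 0).
Hypothesis lam_neq0 : lam != 0.
Hypothesis RB_sq : forall x, R (R x) = - lam *: R x.
Local Notation f := (linfun R).

Definition mul_closed (A : {vspace V}) :=
  forall x y, x \in A -> y \in A -> mul x y \in A.

Lemma limg_RB_mul_closed : mul_closed (limg f).
Proof.
move=> _ _ /memv_imgP [x _ ->] /memv_imgP [y _ ->]; rewrite !lfunE /= RB.
by rewrite -lfunE memv_img ?memvf.
Qed.

Lemma lker_RB_mul_closed : mul_closed (lker f).
Proof.
move=> x y; rewrite !memv_ker !lfunE /= => /eqP Rx /eqP Ry.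
have := RB x y; rewrite Rx Ry !mul0v mulv0 addr0 add0r linearZ /= => /esym/eqP.
by rewrite scaler_eq0 (negbTE lam_neq0).
Qed.

Lemma lker_limg_RB_sum : (lker f + limg f = fullv)%VS.
Proof.
apply/eqP; rewrite eqEsubv subvf; apply/subvP => v _.
have -> : v = (v + lam^-1 *: R v) + f (- lam^-1 *: v).
  by rewrite lfunE linearZ /= scaleNr addrK.
apply: memv_add; last exact: memv_img (memvf _).
rewrite memv_ker lfunE linearD linearZ /= RB_sq scalerA mulrN mulVf //.
by rewrite scaleN1r subrr.
Qed.

Lemma lker_limg_RB_cap : (lker f :&: limg f = 0)%VS.
Proof.
apply/eqP; rewrite -subv0; apply/subvP => v.
case/memv_capP=> v_ker /memv_imgP [u _ v_eq]; move: v_ker.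
rewrite v_eq memv_ker !lfunE /= RB_sq scaler_eq0 oppr_eq0 (negbTE lam_neq0) /=.
by move=> /eqP ->; rewrite memv0.
Qed.

Lemma RB_lker_limgE a1 a2 :
  a1 \in lker f -> a2 \in limg f -> R (a1 + a2) = - lam *: a2.
Proof.
rewrite memv_ker lfunE => /eqP Ra1 /memv_imgP [u _ ->].
by rewrite lfunE linearD /= Ra1 add0r RB_sq.
Qed.

Lemma RB_splitting : exists A1 A2 : {vspace V},
  [/\ mul_closed A1, mul_closed A2, (A1 + A2 = fullv)%VS, (A1 :&: A2 = 0)%VS &
      forall a1 a2, a1 \in A1 -> a2 \in A2 -> R (a1 + a2) = - lam *: a2].
Proof.
exists (lker f), (limg f); split.
- exact: lker_RB_mul_closed.
- exact: limg_RB_mul_closed.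
- exact: lker_limg_RB_sum.
- exact: lker_limg_RB_cap.
- exact: RB_lker_limgE.
Qed.

End RotaBaxterSplitting.

Lemma In_mul0v (F : fieldType) (n : nat) (x : 'rV[F]_n) : In_mul 0 x = 0.
Proof.
by rewrite /In_mul big1 // => i _; rewrite big1 // => j _; rewrite mxE mul0r scale0r.
Qed.

Lemma In_mulv0 (F : fieldType) (n : nat) (x : 'rV[F]_n) : In_mul x 0 = 0.
Proof.
by rewrite /In_mul big1 // => i _; rewrite big1 // => j _; rewrite mxE mulr0 scale0r.
Qed.

Section InProduct.
Variables (F : fieldType) (m : nat).
Local Notation V := 'rV[F]_m.+1.
Local Notation e := (delta_mx 0 ord_max : V).

Definition In_dot (x y : V) : F := \sum_i x 0 i * y 0 i.

Lemma In_enE : In_en F m.+1 = e.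
Proof. by apply/rowP => k; rewrite !mxE. Qed.

Lemma en_last : e 0 ord_max = 1.
Proof. by rewrite mxE !eqxx. Qed.

Lemma In_is_lastE (k : 'I_m.+1) : In_is_last k = (k == ord_max).
Proof. by []. Qed.

Lemma In_basis_mulE (i j : 'I_m.+1) :
  In_basis_mul F i j = (i == ord_max)%:R *: delta_mx 0 j + (i == j)%:R *: e.
Proof.
rewrite /In_basis_mul /In_basis In_enE !In_is_lastE.
case: (eqVneq i ord_max) => [->|i_neq]; case: (eqVneq j ord_max) => [->|j_neq] /=.
- by rewrite scale1r -mulr2n scaler_nat.
- by rewrite scale1r scale0r addr0.
- by rewrite (negbTE i_neq) !scale0r addr0.
- by rewrite scale0r add0r; case: (i == j); rewrite ?scale1r ?scale0r.
Qed.

Lemma In_mulE (x y : V) : In_mul x y = x 0 ord_max *: y + In_dot x y *: e.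
Proof.
have row_mulE i : \sum_j (x 0 i * y 0 j) *: In_basis_mul F i j =
    (x 0 i * (i == ord_max)%:R) *: y + (x 0 i * y 0 i) *: e.
  under eq_bigr do rewrite In_basis_mulE scalerDr !scalerA.
  rewrite big_split /=; congr (_ + _).
    rewrite {2}(row_sum_delta y) scaler_sumr.
    by apply: eq_bigr => j _; rewrite scalerA mulrAC.
  rewrite (bigD1 i) //= eqxx mulr1 big1 ?addr0 // => j j_neq.
  by rewrite eq_sym (negbTE j_neq) mulr0 scale0r.
rewrite /In_mul; under eq_bigr do rewrite row_mulE.
rewrite big_split /= -!scaler_suml; congr (_ *: _ + _).
rewrite (bigD1 ord_max) //= eqxx mulr1 big1 ?addr0 // => i i_neq.
by rewrite (negbTE i_neq) mulr0.
Qed.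

Lemma In_dotC (x y : V) : In_dot x y = In_dot y x.
Proof. by apply: eq_bigr => i _; rewrite mulrC. Qed.

Lemma In_dot_deltar (x : V) k : In_dot x (delta_mx 0 k) = x 0 k.
Proof.
rewrite /In_dot (bigD1 k) //= mxE !eqxx mulr1 big1 ?addr0 // => i i_neq.
by rewrite mxE (negbTE i_neq) andbF mulr0.
Qed.

Lemma In_dot_deltal (x : V) k : In_dot (delta_mx 0 k) x = x 0 k.
Proof. by rewrite In_dotC In_dot_deltar. Qed.

Lemma In_dotZl a (x y : V) : In_dot (a *: x) y = a * In_dot x y.
Proof. by rewrite /In_dot mulr_sumr; apply: eq_bigr => i _; rewrite mxE mulrA. Qed.

Lemma In_dotZr a (x y : V) : In_dot x (a *: y) = a * In_dot x y.
Proof. by rewrite In_dotC In_dotZl In_dotC. Qed.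

End InProduct.

Section InRotaBaxter.
Variables (F : fieldType) (m : nat) (lam : F).
Local Notation V := 'rV[F]_m.+1.
Variable R : {linear V -> V}.
Hypothesis RB : forall x y,
  In_mul (R x) (R y) = R (In_mul (R x) y + In_mul x (R y) + lam *: In_mul x y).
Local Notation e := (delta_mx 0 ord_max : V).
Local Notation D y := (R (R y) + lam *: R y).

Lemma In_RB_identity x y :
  In_dot (R x) (R y) *: e =
    (In_dot (R x) y + In_dot x (R y) + lam * In_dot x y) *: R e
  + x 0 ord_max *: D y.
Proof.
apply: (addrI (R x 0 ord_max *: R y)).
rewrite -In_mulE RB !In_mulE !linearD !linearZ /=.
by apply/rowP => k; rewrite !mxE; ring.
Qed.

Lemma RB_defect_rank_one y : D y = y 0 ord_max *: D e.
Proof.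
have coef_sym : In_dot (R y) e + In_dot y (R e) + lam * In_dot y e =
                In_dot (R e) y + In_dot e (R y) + lam * In_dot e y.
  rewrite [In_dot (R y) e]In_dotC [In_dot y (R e)]In_dotC [In_dot y e]In_dotC.
  by rewrite [_ + In_dot _ _]addrC.
have := In_RB_identity e y; have := In_RB_identity y e.
by rewrite [In_dot (R y) (R e)]In_dotC coef_sym en_last scale1r => -> /addrI ->.
Qed.

Lemma R_RB_defect (y : V) : y 0 ord_max *: R (D e) = R y 0 ord_max *: D e.
Proof.
have := congr1 R (RB_defect_rank_one y); rewrite linearZ /= => <-.
by rewrite -RB_defect_rank_one linearD linearZ.
Qed.

Hypothesis two_neq0 : (2%:R : F) != 0.

Lemma RB_defect_eq0 : D e = 0.
Proof.
apply/eqP/negPn/negP => d_neq0; set mu := R e 0 ord_max.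
have R_d : R (D e) = mu *: D e by have := R_RB_defect e; rewrite en_last scale1r.
have last_R y : R y 0 ord_max = mu * y 0 ord_max.
  have /eqP := R_RB_defect y; rewrite R_d scalerA -subr_eq0 -scalerBl.
  by rewrite scaler_eq0 (negbTE d_neq0) orbF subr_eq0 mulrC => /eqP.
have Re : R e = mu *: e.
  apply/rowP => k; rewrite [RHS]mxE; case: (eqVneq k ord_max) => [-> | k_neq].
    by rewrite en_last mulr1.
  have dk_last : (delta_mx 0 k : V) 0 ord_max = 0.
    by rewrite mxE eq_sym (negbTE k_neq).
  (* The k-th coordinate of the identity at (e_n, e_k) reads 0 = (R e_n)_k^2. *)
  have := In_RB_identity e (delta_mx 0 k : V).
  rewrite RB_defect_rank_one dk_last scale0r scaler0 addr0 In_dot_deltar.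
  rewrite !In_dot_deltal last_R dk_last mulr0 addr0 => /rowP /(_ k).
  rewrite !mxE (negbTE k_neq) !mulr0 addr0 => /esym /eqP.
  by rewrite mulf_eq0 orbb => /eqP.
have De : D e = (mu * mu + lam * mu) *: e.
  by rewrite Re linearZ /= Re !scalerA -scalerDl.
have := In_RB_identity e e; rewrite en_last scale1r De Re !In_dotZl !In_dotZr.
rewrite In_dot_deltal en_last => /rowP /(_ ord_max); rewrite !mxE !eqxx.
move=> /eqP; rewrite -subr_eq0 => /eqP E.
have /eqP : - 2%:R * (mu * mu + lam * mu) = 0 by rewrite -E /=; ring.
rewrite mulf_eq0 oppr_eq0 (negbTE two_neq0) /= => /eqP c0.
by move: d_neq0; rewrite De c0 scale0r eqxx.
Qed.

Lemma In_RB_sq (x : V) : R (R x) = - lam *: R x.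
Proof.
by apply/eqP; rewrite scaleNr -addr_eq0 RB_defect_rank_one RB_defect_eq0 scaler0.
Qed.

End InRotaBaxter.

Theorem corollary1 (F : fieldType) (n : nat) (lam : F)
  (R : 'rV[F]_n -> 'rV[F]_n) :
  (2%:R : F) != 0 -> (1 <= n)%N -> lam != 0 ->
  is_RB_operator lam R ->
  exists A1 A2 : {vspace 'rV[F]_n},
    [/\ is_subalgebra A1, is_subalgebra A2,
        (A1 + A2 = fullv)%VS, (A1 :&: A2 = 0)%VS &
        forall a1 a2, a1 \in A1 -> a2 \in A2 -> R (a1 + a2) = - lam *: a2].
Proof.
move=> two_neq0 n_gt0 lam_neq0 [R_linear RB].
case: n R R_linear RB n_gt0 => [// | m] R R_linear RB _.
pose Rl : {linear 'rV[F]_m.+1 -> 'rV[F]_m.+1} :=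
  HB.pack R (GRing.isLinear.Build F _ _ *:%R R R_linear).
have RBl : forall x y, In_mul (Rl x) (Rl y) =
    Rl (In_mul (Rl x) y + In_mul x (Rl y) + lam *: In_mul x y) := RB.
exact: RB_splitting RBl (@In_mul0v _ _) (@In_mulv0 _ _) lam_neq0
  (In_RB_sq RBl two_neq0).
Qed.
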